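(* Let $P,\widehat P$ be transition kernels on finite $\mathcal S\times\mathcal A$, $r:\mathcal S\times\mathcal A\to[0,1]$, $n$ a positive integer, and $\pi$ a policy whose gain $\rho^\pi$ (under $P$) is a constant vector. Let $\overline h=h^\pi-(\min_sh^\pi(s))\mathbf 1$ and $\ell=\lceil\log_2\log_2(\|\overline h\|_\infty+4)\rceil$. Suppose that for some $\alpha>0$ the elementwise inequalities $$\big|(\widehat P_\pi-P_\pi)\overline h^{\circ2^k}\big|\le\sqrt{\frac{\alpha\,\mathbb V_{P_\pi}[\overline h^{\circ2^k}]}{n}}+\frac{\alpha\,2^k}{n}\big(\|\overline h\|_\infty+1\big)^{2^k}\mathbf 1$$ hold for all $k=0,\dots,\ell$. Then $$\|\widehat\rho^\pi-\rho^\pi\|_\infty\le2(\ell+1)\sqrt{\frac{\alpha(\|\overline h\|_\infty+1)}{n}}+(\ell+1)\frac{2\alpha}{n}\big(\|\overline h\|_\infty+1\big).$$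
   Context: $P_\pi(s,s')=\sum_a\pi(a|s)P(s'|s,a)$, $r_\pi(s)=\sum_a\pi(a|s)r(s,a)$. $P^\infty_\pi$ is the Cesàro limit of $P_\pi^t$; gain $\rho^\pi=P^\infty_\pi r_\pi$, bias $h^\pi=\mathrm{C\text{-}lim}_T\sum_{t<T}(P_\pi^tr_\pi-\rho^\pi)$ (Cesàro limit); $\widehat\rho^\pi=\widehat P^\infty_\pi r_\pi$ is the gain under $\widehat P$. $x^{\circ m}$ is the elementwise $m$-th power; $|\cdot|,\sqrt\cdot$ elementwise. $\mathbb V_{P_\pi}[x](s)=\sum_{s'}P_\pi(s,s')\big(x(s')-\sum_{s''}P_\pi(s,s'')x(s'')\big)^2$. *)

From HB Require Import structures.
From mathcomp Require Import all_boot all_order all_algebra.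
From mathcomp Require Import all_classical all_reals all_analysis.
Set Implicit Arguments. Unset Strict Implicit. Unset Printing Implicit Defensive.
Import Order.TTheory GRing.Theory Num.Theory.
Import numFieldNormedType.Exports.
Local Open Scope ring_scope.

Section MDP.
Variables (R : realType) (S A : finType).

(* a transition kernel P(s'|s,a) = P s a s' *)
Definition is_kernel (P : S -> A -> S -> R) : Prop :=
  (forall s a s', 0 <= P s a s') /\ (forall s a, \sum_(s' : S) P s a s' = 1).

(* a (stochastic, stationary) policy pi(a|s) = pi s a *)
Definition is_policy (pi : S -> A -> R) : Prop :=
  (forall s a, 0 <= pi s a) /\ (forall s, \sum_(a : A) pi s a = 1).

Definition Ppi (P : S -> A -> S -> R) (pi : S -> A -> R) : S -> S -> R :=
  fun s s' => \sum_(a : A) pi s a * P s a s'.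

Definition rpi (pi : S -> A -> R) (r : S -> A -> R) : S -> R :=
  fun s => \sum_(a : A) pi s a * r s a.

Definition mapply (M : S -> S -> R) (x : S -> R) : S -> R :=
  fun s => \sum_(s' : S) M s s' * x s'.

Fixpoint mpow (M : S -> S -> R) (t : nat) : S -> S -> R :=
  match t with
  | 0 => fun s s' => (s == s')%:R
  | t'.+1 => fun s s' => \sum_(u : S) mpow M t' s u * M u s'
  end.

Definition cesaro (u : nat -> R) : nat -> R :=
  fun T => (T%:R)^-1 * \sum_(t < T) u t.

Definition clim (u : nat -> R) : R := limn (cesaro u).

Definition Pinf (M : S -> S -> R) : S -> S -> R :=
  fun s s' => clim (fun t => mpow M t s s').

Definition gain P pi r : S -> R := mapply (Pinf (Ppi P pi)) (rpi pi r).

Definition bias P pi r : S -> R :=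
  fun s => clim (fun T => \sum_(t < T)
              (mapply (mpow (Ppi P pi) t) (rpi pi r) s - gain P pi r s)).

Definition supn (x : S -> R) : R := \big[Num.max/0]_(s : S) `|x s|.

(* minimum over S (the initial value supn x is >= every x s,
   so this is exactly min_s x s when S is nonempty) *)
Definition minS (x : S -> R) : R := \big[Num.min/supn x]_(s : S) x s.

Definition epow (x : S -> R) (m : nat) : S -> R := fun s => x s ^+ m.

Definition Var (M : S -> S -> R) (x : S -> R) : S -> R :=
  fun s => \sum_(s' : S) M s s' * (x s' - \sum_(s'' : S) M s s'' * x s'') ^+ 2.

End MDP.

Definition log2 {R : realType} (x : R) : R := ln x / ln 2.

(* Write Mp, Mh for the chains of pi under P and Phat, x for the shifted bias
   hbar, H = |x|_oo, u = alpha / n, and let mu be a row of the Cesaro limit of Mh,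
   an Mh-invariant probability vector.  The Poisson equation r_pi = rho + x - Mp x
   turns the gain gap at a state into the mu-mean of (Mh - Mp) x, and also gives
   x - Mp x <= 1.  By invariance of mu, the mu-mean of Var_Mp[x^m] is at most the
   mu-mean gap at x^(2m) plus (x^(2m) - (Mp x)^(2m)), which is <= 2m H^(2m-1).
   Averaging the hypothesis against mu and using concavity of the square root thus
   gives, for the mu-mean gaps D_k at the powers x^(2^k),
     D_k <= sqrt (u (D_(k+1) + 2^(k+1) H^(2^(k+1)-1))) + u 2^k (H+1)^(2^k),
   which is closed at level l + 1 by D_(l+1) <= H^(2^(l+1)); unrolling it, the
   contribution of the top level is an iterated square root that the choice of l
   makes of the order of the main term.  The Cesaro limit and the Poisson equation
   of a finite stochastic matrix M come from R^S = ker (I - M) + im (I - M). *)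

From Pilot Require Import Defs.
From HB Require Import structures.
From mathcomp Require Import all_boot all_order all_algebra.
From mathcomp Require Import all_classical all_reals all_analysis.
From mathcomp Require Import ring lra.
Set Implicit Arguments. Unset Strict Implicit. Unset Printing Implicit Defensive.
Import Order.TTheory GRing.Theory Num.Theory.
Local Open Scope ring_scope.

Section WeightedMeans.
Variables (R : realType) (S : finType) (w : S -> R).
Hypotheses (w_ge0 : forall s, 0 <= w s) (w_sum1 : \sum_s w s = 1).

Lemma mean_cst (a : R) : \sum_s w s * a = a.
Proof. by rewrite -big_distrl /= w_sum1 mul1r. Qed.

Lemma mean_ge0 (y : S -> R) : (forall s, 0 <= y s) -> 0 <= \sum_s w s * y s.
Proof. by move=> y_ge0; apply: sumr_ge0 => s _; rewrite mulr_ge0. Qed.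

Lemma mean_le (y : S -> R) (K : R) : (forall s, y s <= K) -> \sum_s w s * y s <= K.
Proof.
by move=> yK; rewrite -[leRHS]mean_cst; apply: ler_sum => s _; rewrite ler_wpM2l.
Qed.

Lemma mean_sqr_dev (y : S -> R) :
  \sum_s w s * (y s - \sum_u w u * y u) ^+ 2
  = \sum_s w s * y s ^+ 2 - (\sum_u w u * y u) ^+ 2.
Proof.
set m := \sum_u w u * y u.
have -> : \sum_s w s * (y s - m) ^+ 2
    = \sum_s w s * y s ^+ 2 - m *+ 2 * m + m ^+ 2 * \sum_s w s.
  rewrite /m !big_distrr /= -sumrB -big_split /=; apply: eq_bigr => s _; ring.
by rewrite w_sum1; ring.
Qed.

Lemma sqr_mean_le (y : S -> R) : (\sum_s w s * y s) ^+ 2 <= \sum_s w s * y s ^+ 2.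
Proof. by rewrite -subr_ge0 -mean_sqr_dev mean_ge0 // => s; rewrite sqr_ge0. Qed.

Lemma mean_sqrt_le (v : S -> R) : (forall s, 0 <= v s) ->
  \sum_s w s * Num.sqrt (v s) <= Num.sqrt (\sum_s w s * v s).
Proof.
move=> v_ge0; have m_ge0 : 0 <= \sum_s w s * Num.sqrt (v s).
  by apply: mean_ge0 => s; rewrite sqrtr_ge0.
rewrite -(ger0_norm m_ge0) -sqrtr_sqr ler_sqrt; last exact: mean_ge0.
apply: le_trans (sqr_mean_le _) _; apply: ler_sum => s _; by rewrite sqr_sqrtr.
Qed.

End WeightedMeans.

Section StochasticRows.
Variables (R : realType) (S : finType) (M : S -> S -> R).
Hypotheses (M_ge0 : forall s s', 0 <= M s s') (M_sum1 : forall s, \sum_s' M s s' = 1).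

Lemma mapply_cst (a : R) s : mapply M (fun=> a) s = a.
Proof. exact: mean_cst. Qed.

Lemma mapply_in_range (x : S -> R) (K : R) s :
  (forall u, 0 <= x u <= K) -> 0 <= mapply M x s <= K.
Proof.
by move=> xK; rewrite (mean_ge0 (M_ge0 s)) ?(mean_le (M_ge0 s)) // => u; case/andP: (xK u).
Qed.

Lemma Var_mapply (x : S -> R) s :
  Var M x s = mapply M (fun u => x u ^+ 2) s - mapply M x s ^+ 2.
Proof. exact: mean_sqr_dev. Qed.

Lemma exp2n_mapply_le (x : S -> R) k s : (forall u, 0 <= x u) ->
  mapply M x s ^+ (2 ^ k) <= mapply M (epow x (2 ^ k)) s.
Proof.
move=> x_ge0; elim: k => [|k IH]; first by rewrite expr1.
have epow_ge0 : forall u, 0 <= epow x (2 ^ k) u by move=> u; rewrite exprn_ge0.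
rewrite expnSr exprM.
apply: (@le_trans _ _ (mapply M (epow x (2 ^ k)) s ^+ 2)).
  by rewrite lerXn2r ?nnegrE ?exprn_ge0 ?(mean_ge0 (M_ge0 s)).
suff -> : mapply M (epow x (2 ^ k * 2)) s = \sum_u M s u * epow x (2 ^ k) u ^+ 2.
  exact: sqr_mean_le.
by apply: eq_bigr => u _; rewrite /epow exprM.
Qed.

End StochasticRows.

Section CesaroMeans.
Import numFieldNormedType.Exports.
Local Open Scope classical_set_scope.
Variable R : realType.

Lemma cesaro_cvg_bounded (w : nat -> R) (a C : R) :
  (forall T, `|\sum_(t < T) w t - T%:R * a| <= C) -> Defs.cesaro w @ \oo --> a.
Proof.
move=> wC; apply/cvgrPdist_le => e e_gt0.
have C_ge0 : 0 <= C by have := wC 0%N; rewrite big_ord0 mul0r subr0 normr0.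
near=> T.
have T_gt0 : 0 < T%:R :> R by rewrite ltr0n; near: T; exact: nbhs_infty_gt.
have CeT : C / e < T%:R.
  near: T; apply: filterS (nbhs_infty_ge (Num.truncn (C / e)).+1) => T HT.
  by apply: lt_le_trans (truncnS_gt _) _; rewrite ler_nat.
have -> : a - Defs.cesaro w T = - (T%:R^-1 * (\sum_(t < T) w t - T%:R * a)).
  by rewrite /Defs.cesaro mulrBr mulrA mulVf ?mul1r ?opprB // gt_eqF.
rewrite normrN normrM ger0_norm ?invr_ge0 ?ltW //.
rewrite mulrC ltr_pdivrMr //.
by apply: le_lt_trans (wC T) _; rewrite mulrC -ltr_pdivrMr.
Unshelve. all: end_near.
Qed.

Section StochasticMatrix.
Variables (S : finType) (M : S -> S -> R).
Hypotheses (M_ge0 : forall s s', 0 <= M s s') (M_sum1 : forall s, \sum_s' M s s' = 1).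

Local Notation Mt t := (iter t (mapply M)).

Lemma eq_mapply (f g : S -> R) : f =1 g -> mapply M f =1 mapply M g.
Proof. by move=> fg s; apply: eq_bigr => u _; rewrite fg. Qed.

Lemma mapplyD (f g : S -> R) s :
  mapply M (fun u => f u + g u) s = mapply M f s + mapply M g s.
Proof. by rewrite /mapply -big_split; apply: eq_bigr => u _; rewrite mulrDr. Qed.

Lemma mapplyB (f g : S -> R) s :
  mapply M (fun u => f u - g u) s = mapply M f s - mapply M g s.
Proof. by rewrite /mapply -sumrB; apply: eq_bigr => u _; rewrite mulrBr. Qed.

Lemma mapply_sumr (I : finType) (c : I -> R) (g : I -> S -> R) s :
  mapply M (fun u => \sum_i c i * g i u) s = \sum_i c i * mapply M (g i) s.
Proof.
rewrite /mapply; under eq_bigr do rewrite big_distrr /=.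
rewrite exchange_big /=; apply: eq_bigr => i _; rewrite big_distrr /=.
by apply: eq_bigr => u _; rewrite mulrCA.
Qed.

Lemma sum_mul_indicator (f : S -> R) s' : \sum_u f u * (u == s')%:R = f s'.
Proof.
rewrite (bigD1 s') //= eqxx mulr1 big1 ?addr0 // => u /negbTE ->.
by rewrite mulr0.
Qed.

Lemma mapply_indicator (N : S -> S -> R) s s' : mapply N (fun u => (u == s')%:R) s = N s s'.
Proof. exact: sum_mul_indicator. Qed.

Lemma norm_iter_mapply_le (y : S -> R) t s : `|Mt t y s| <= \sum_u `|y u|.
Proof.
elim: t s => [|t IH] s /=.
  by rewrite (bigD1 s) //= lerDl sumr_ge0.
apply: le_trans (ler_norm_sum _ _ _) _.
apply: le_trans (mean_le (M_ge0 s) (M_sum1 s) IH).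
by apply: ler_sum => u _; rewrite normrM ger0_norm.
Qed.

Definition ergodic_split (z x y : S -> R) : Prop :=
  (forall s, mapply M x s = x s) /\ (forall s, z s = x s + y s - mapply M y s).

Lemma iter_split (z x y : S -> R) t s : ergodic_split z x y ->
  Mt t z s = x s + Mt t y s - Mt t.+1 y s.
Proof.
case=> x_inv z_split; elim: t s => [|t IH] s //=.
by rewrite (eq_mapply IH) mapplyB mapplyD x_inv.
Qed.

Lemma sum_iter_split (z x y : S -> R) T s : ergodic_split z x y ->
  \sum_(t < T) Mt t z s = T%:R * x s + y s - Mt T y s.
Proof.
move=> zxy; elim: T => [|T IH]; first by rewrite big_ord0 mul0r add0r subrr.
rewrite big_ord_recr /= IH (iter_split _ _ zxy) -natr1 -[mapply M (Mt T y) s]/(Mt T.+1 y s).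
ring.
Qed.

Lemma cesaro_iter_split (z x y : S -> R) s : ergodic_split z x y ->
  Defs.cesaro (fun t => Mt t z s) @ \oo --> x s.
Proof.
move=> zxy; apply: (cesaro_cvg_bounded (C := \sum_u `|y u| + \sum_u `|y u|)) => T.
rewrite (sum_iter_split _ _ zxy) (_ : forall a b c : R, a + b - c - a = b - c);
  last by move=> *; ring.
apply: le_trans (ler_normB _ _) _.
by rewrite lerD ?(norm_iter_mapply_le _ 0) ?norm_iter_mapply_le.
Qed.

Lemma ergodic_split_unique (z x y x' y' : S -> R) :
  ergodic_split z x y -> ergodic_split z x' y' -> x =1 x'.
Proof.
move=> zxy zxy' s.
rewrite -(cvg_lim (@Rhausdorff R) (cesaro_iter_split (s := s) zxy)).
by rewrite -(cvg_lim (@Rhausdorff R) (cesaro_iter_split (s := s) zxy')).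
Qed.

Definition row_of_fun (z : S -> R) : 'rV[R]_#|S| := \row_i z (enum_val i).
Definition fun_of_row (v : 'rV[R]_#|S|) : S -> R := fun s => v 0 (enum_rank s).
Definition transposed_mx : 'M[R]_#|S| := \matrix_(i, j) M (enum_val j) (enum_val i).

Lemma row_of_funK (z : S -> R) : fun_of_row (row_of_fun z) =1 z.
Proof. by move=> s; rewrite /fun_of_row mxE enum_rankK. Qed.

Lemma fun_of_row_mul (v : 'rV[R]_#|S|) s :
  fun_of_row (v *m transposed_mx) s = mapply M (fun_of_row v) s.
Proof.
rewrite /fun_of_row /mapply mxE [RHS](reindex (@enum_val S (pred_of_simpl predT))) /=;
  last by exists enum_rank => i _; rewrite ?enum_valK ?enum_rankK.
by apply: eq_bigr => i _; rewrite mxE enum_rankK enum_valK mulrC.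
Qed.

Lemma ergodic_split_exists (z : S -> R) : exists x y, ergodic_split z x y.
Proof.
pose A : 'M[R]_#|S| := 1%:M - transposed_mx.
have mulA v : v *m A = v - v *m transposed_mx by rewrite mulmxBr mulmx1.
have capA : (kermx A :&: A)%MS = 0.
  apply/eqP/rowV0P => v; rewrite sub_capmx => /andP[/sub_kermxP vA /submxP[y vE]].
  have v_inv : forall s, mapply M (fun_of_row v) s = fun_of_row v s.
    by move=> s; rewrite -fun_of_row_mul; move/eqP: vA; rewrite mulA subr_eq0 => /eqP <-.
  have split1 : ergodic_split (fun_of_row v) (fun_of_row v) (fun=> 0).
    by split=> // s; rewrite mapply_cst // addr0 subr0.
  have split2 : ergodic_split (fun_of_row v) (fun=> 0) (fun_of_row y).
    split=> s; first exact: mapply_cst.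
    by rewrite add0r -fun_of_row_mul vE mulA /fun_of_row !mxE.
  apply/rowP => j; have := ergodic_split_unique split1 split2 (enum_val j).
  by rewrite /fun_of_row enum_valK !mxE.
have /sub_addsmxP[[u1 u2] /= zE] : (row_of_fun z <= kermx A + A)%MS.
  apply: submx_full; rewrite /row_full mxrank_disjoint_sum // mxrank_ker subnK //.
  exact: rank_leq_col.
exists (fun_of_row (u1 *m kermx A)), (fun_of_row u2); split=> s.
  have : u1 *m kermx A *m A = 0 by rewrite -mulmxA mulmx_ker mulmx0.
  by rewrite -fun_of_row_mul mulA => /eqP; rewrite subr_eq0 => /eqP <-.
by rewrite -fun_of_row_mul -(row_of_funK z s) zE mulA /fun_of_row !mxE addrA.
Qed.

Lemma mapply_mpow t (z : S -> R) s : mapply (mpow M t) z s = Mt t z s.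
Proof.
elim: t z s => [|t IH] z s.
  by rewrite /mapply /=; under eq_bigr do rewrite mulrC eq_sym; exact: sum_mul_indicator.
rewrite iterSr -IH /mapply /=; under eq_bigr do rewrite big_distrl /=.
rewrite exchange_big /=; apply: eq_bigr => u _.
by rewrite big_distrr /=; apply: eq_bigr => v _; rewrite mulrA.
Qed.

Lemma mpow_indicator s s' : (fun t => mpow M t s s') = fun t => Mt t (fun u => (u == s')%:R) s.
Proof. by apply/funext => t; rewrite -mapply_mpow mapply_indicator. Qed.

Lemma mpow_ge0 t s s' : 0 <= mpow M t s s'.
Proof.
elim: t s s' => [|t IH] s s' /=; first exact: ler0n.
by apply: sumr_ge0 => u _; rewrite mulr_ge0.
Qed.

Lemma cesaro_mpow_cvg s s' :
  Defs.cesaro (fun t => mpow M t s s') @ \oo --> Pinf M s s'.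
Proof.
have [x [y xy]] := ergodic_split_exists (fun u => (u == s')%:R).
have cv := cesaro_iter_split (s := s) xy.
by rewrite /Pinf /clim mpow_indicator (cvg_lim (@Rhausdorff R) cv).
Qed.

Lemma Pinf_ge0 s s' : 0 <= Pinf M s s'.
Proof.
apply: limr_ge; first by apply/cvg_ex; exists (Pinf M s s'); exact: cesaro_mpow_cvg.
apply: nearW => T; rewrite mulr_ge0 ?invr_ge0 ?ler0n ?sumr_ge0 // => t _.
exact: mpow_ge0.
Qed.

Lemma Pinf_split (z x y : S -> R) s : ergodic_split z x y -> mapply (Pinf M) z s = x s.
Proof.
(* Splits of the indicator vectors combine linearly into a split of [z], and their
   invariant parts are the columns of [Pinf M]. *)
move=> zxy; pose e (s' u : S) : R := (u == s')%:R.
have /choice[xy xyP] : forall s', exists p : (S -> R) * (S -> R), ergodic_split (e s') p.1 p.2.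
  by move=> s'; have [x' [y' ?]] := ergodic_split_exists (e s'); exists (x', y').
have PinfE s' : Pinf M s s' = (xy s').1 s.
  by rewrite /Pinf /clim mpow_indicator (cvg_lim (@Rhausdorff R) (cesaro_iter_split (xyP s'))).
have zxy' : ergodic_split z (fun u => \sum_s' z s' * (xy s').1 u)
                            (fun u => \sum_s' z s' * (xy s').2 u).
  split=> u; rewrite mapply_sumr; first by apply: eq_bigr => s' _; rewrite (xyP s').1.
  rewrite -big_split -sumrB /= -[LHS]sum_mul_indicator.
  by apply: eq_bigr => s' _; rewrite eq_sym -/(e s' u) (xyP s').2; ring.
rewrite (ergodic_split_unique zxy zxy'); apply: eq_bigr => s' _.
by rewrite PinfE mulrC.
Qed.

Lemma Pinf_sum1 s : \sum_s' Pinf M s s' = 1.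
Proof.
under eq_bigr do rewrite -[Pinf M s _]mulr1.
apply: (Pinf_split (y := fun=> 0)); split=> u; rewrite mapply_cst //; ring.
Qed.

Lemma Pinf_mapply (z : S -> R) s : mapply (Pinf M) (mapply M z) s = mapply (Pinf M) z s.
Proof.
have [x [y [x_inv zE]]] := ergodic_split_exists z.
rewrite (@Pinf_split z x y) //; apply: (Pinf_split (y := mapply M y)); split=> // u.
by rewrite (eq_mapply zE) mapplyB mapplyD x_inv.
Qed.

Definition cesaro_bias (z : S -> R) : S -> R := fun s =>
  clim (fun T => \sum_(t < T) (mapply (mpow M t) z s - mapply (Pinf M) z s)).

Lemma cesaro_bias_split (z x y x' y' : S -> R) :
  ergodic_split z x y -> ergodic_split y x' y' -> cesaro_bias z =1 (fun s => y s - x' s).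
Proof.
move=> zxy yxy s; apply: cvg_lim => //.
apply: (cesaro_cvg_bounded (C := \sum_u `|y' u| + \sum_u `|y' u|)) => T.
have sumE T' : \sum_(t < T') (mapply (mpow M t) z s - mapply (Pinf M) z s) = y s - Mt T' y s.
  rewrite sumrB sumr_const card_ord (Pinf_split _ zxy).
  under eq_bigr do rewrite mapply_mpow.
  by rewrite (sum_iter_split _ _ zxy); ring.
under eq_bigr do rewrite sumE.
rewrite sumrB sumr_const card_ord (sum_iter_split _ _ yxy).
rewrite (_ : _ - _ - _ = - (y' s - Mt T y' s)); last by ring.
rewrite normrN; apply: le_trans (ler_normB _ _) _.
by rewrite lerD ?(norm_iter_mapply_le _ 0) ?norm_iter_mapply_le.
Qed.

Lemma poisson_equation (z : S -> R) s :
  z s = mapply (Pinf M) z s + cesaro_bias z s - mapply M (cesaro_bias z) s.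
Proof.
have [x [y zxy]] := ergodic_split_exists z.
have [x' [y' yxy]] := ergodic_split_exists y.
rewrite (Pinf_split _ zxy) (eq_mapply (cesaro_bias_split zxy yxy)) mapplyB.
rewrite (cesaro_bias_split zxy yxy) yxy.1 zxy.2; ring.
Qed.

End StochasticMatrix.
End CesaroMeans.

Section RealInequalities.
Variable R : realType.

Lemma sqrtr_le (x y : R) : 0 <= y -> x <= y ^+ 2 -> Num.sqrt x <= y.
Proof. by move=> y_ge0 xy; rewrite -(ger0_norm y_ge0) -sqrtr_sqr ler_wsqrtr. Qed.

Lemma subrXX_le (a b K : R) N : 0 <= a <= K -> 0 <= b <= K -> a - b <= 1 ->
  a ^+ N - b ^+ N <= N%:R * K ^+ N.-1.
Proof.
move=> /andP[a_ge0 aK] /andP[b_ge0 bK] ab_le1.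
have K_ge0 : 0 <= K by apply: le_trans aK.
rewrite subrXX; set Q := \sum_(i < N) _.
have Q_ge0 : 0 <= Q by rewrite sumr_ge0 // => i _; rewrite mulr_ge0 ?exprn_ge0.
apply: le_trans (ler_wpM2r Q_ge0 ab_le1) _.
have -> : N%:R * K ^+ N.-1 = \sum_(i < N) K ^+ N.-1 by rewrite sumr_const card_ord mulr_natl.
rewrite mul1r; apply: ler_sum => i _.
have iN : (i <= N.-1)%N by rewrite -ltnS (ltn_predK (ltn_ord i)).
by rewrite -[in leRHS](subnK iN) exprD ler_pM ?exprn_ge0 ?lerXn2r ?nnegrE.
Qed.

End RealInequalities.

Section LevelRecursion.
Variables (R : realType) (H u : R).
Hypotheses (H_ge0 : 0 <= H) (u_ge0 : 0 <= u).

Let B := H + 1.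
Let s := Num.sqrt (u * B).
Let G := 4 * (s + s ^+ 2).
(* The top-level bound [H] after [j] levels of unrolling. *)
Let tau j := iter j (fun t => Num.sqrt (u * B * t)) H.

Let B_ge1 : 1 <= B. Proof. by rewrite /B lerDr. Qed.
Let s_ge0 : 0 <= s. Proof. exact: sqrtr_ge0. Qed.
Let B_ge0 : 0 <= B. Proof. exact: le_trans B_ge1. Qed.
Let uB_ge0 : 0 <= u * B. Proof. exact: mulr_ge0. Qed.
Let sqr_s : s ^+ 2 = u * B. Proof. exact: sqr_sqrtr. Qed.
Let H_le_B : H <= B. Proof. by rewrite /B lerDl. Qed.
Let tau_ge0 j : 0 <= tau j. Proof. by case: j => [|j] //=; exact: sqrtr_ge0. Qed.

Lemma level_step (m : nat) (D D' t : R) : (0 < m)%N -> 0 <= t ->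
  D' <= B ^+ m.*2.-1 * (m.*2%:R * G + t) ->
  D <= Num.sqrt (u * (D' + m.*2%:R * H ^+ m.*2.-1)) + u * m%:R * B ^+ m ->
  D <= B ^+ m.-1 * (m%:R * G + Num.sqrt (u * B * t)).
Proof.
case: m => // p _ t_ge0; set m : R := p.+1%:R.
have m_ge1 : 1 <= m by rewrite ler1n.
have m2E : p.+1.*2%:R = 2 * m by rewrite -mul2n natrM.
have expE : p.+1.*2.-1 = (p + p).+1 by rewrite doubleS -addnn.
rewrite m2E expE => hD' hD.
set t' := Num.sqrt (u * B * t); set A := m * (4 * s + 3 * s ^+ 2).
have t'_ge0 : 0 <= t' by exact: sqrtr_ge0.
have A_ge0 : 0 <= A by rewrite mulr_ge0 ?(le_trans _ m_ge1) ?addr_ge0 ?mulr_ge0 ?sqr_ge0.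
have Bp_ge0 : 0 <= B ^+ p by rewrite exprn_ge0.
have BE : B ^+ (p + p).+1 = B ^+ p ^+ 2 * B by rewrite exprS exprD; ring.
have HB : H ^+ (p + p).+1 <= B ^+ (p + p).+1 by rewrite lerXn2r ?nnegrE.
have inner : u * (D' + 2 * m * H ^+ (p + p).+1) <= B ^+ p ^+ 2 * (u * B * (2 * m * (G + 1) + t)).
  rewrite (_ : _ * (u * B * _) = u * (B ^+ (p + p).+1 * (2 * m * G + t) + 2 * m * B ^+ (p + p).+1));
    last by rewrite BE; ring.
  by rewrite ler_wpM2l // lerD // ler_wpM2l // mulr_ge0 // (le_trans _ m_ge1).
(* [G + 1 = (1 + 2 s)^2], and [2 (1 + 2 s)^2 <= (4 + 3 s)^2] *)
have key : u * B * (2 * m * (G + 1)) <= A ^+ 2.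
  rewrite -sqr_s /A /G.
  have -> : (m * (4 * s + 3 * s ^+ 2)) ^+ 2 = m * s ^+ 2 * (m * (4 + 3 * s) ^+ 2) by ring.
  have -> : s ^+ 2 * (2 * m * (4 * (s + s ^+ 2) + 1)) = m * s ^+ 2 * (2 * (1 + 2 * s) ^+ 2) by ring.
  rewrite ler_wpM2l ?mulr_ge0 ?sqr_ge0 ?(le_trans _ m_ge1) //.
  apply: (@le_trans _ _ ((4 + 3 * s) ^+ 2)); first by have := s_ge0; nra.
  by rewrite ler_peMl ?sqr_ge0.
have sqrt_le : Num.sqrt (u * (D' + 2 * m * H ^+ (p + p).+1)) <= B ^+ p * (A + t').
  apply: sqrtr_le; first by rewrite mulr_ge0 ?addr_ge0.
  apply: (le_trans inner); rewrite exprMn ler_wpM2l ?sqr_ge0 //.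
  have t'E : t' ^+ 2 = u * B * t by rewrite sqr_sqrtr // mulr_ge0.
  have : 0 <= A * t' by rewrite mulr_ge0.
  by rewrite mulrDr; move: key t'E; nra.
apply: (le_trans hD); apply: le_trans (lerD sqrt_le (lexx _)) _.
rewrite (_ : u * m * B ^+ p.+1 = B ^+ p * (m * s ^+ 2)); last by rewrite sqr_s exprS; ring.
rewrite (_ : B ^+ p * (m * G + t') = B ^+ p * (A + t') + B ^+ p * (m * s ^+ 2)) //.
by rewrite /A /G; ring.
Qed.

Lemma tau_exp j : tau j ^+ (2 ^ j) = (u * B) ^+ (2 ^ j).-1 * H.
Proof.
elim: j => [|j IH]; first by rewrite /= expr1 expr0 mul1r.
have pow_gt0 : (0 < 2 ^ j)%N by rewrite expn_gt0.
have expE : (2 * 2 ^ j).-1 = (2 ^ j + (2 ^ j).-1)%N.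
  by rewrite mul2n -addnn -{2}(prednK pow_gt0) addnS.
rewrite expnS exprM /= sqr_sqrtr ?uB_ge0 ?mulr_ge0 ?tau_ge0 //.
by rewrite exprMn IH mulrA -exprD expE.
Qed.

Lemma tau_le_sqrt_sum (L : nat) : H + 4 <= 2 ^+ (2 ^ L) -> tau L.+1 <= 2 * (s + s ^+ 2).
Proof.
move=> HL; set N := (2 ^ L.+1)%N.
have N_gt0 : (0 < N)%N by rewrite expn_gt0.
have bound_ge0 : 0 <= 2 * (s + s ^+ 2) by rewrite mulr_ge0 ?addr_ge0 ?sqr_ge0.
rewrite -(ler_pXn2r N_gt0) ?nnegrE // tau_exp -/N.
have H_le : H <= 2 ^+ N.
  apply: (@le_trans _ _ (H + 4)); first lra.
  by apply: (le_trans HL); rewrite ler_eXn2l // ?ltr1n // leq_exp2l.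
have [uB_ge1|uB_lt1] := lerP 1 (u * B).
  apply: (@le_trans _ _ ((u * B) ^+ N * 2 ^+ N)).
    by rewrite ler_pM ?exprn_ge0 // ler_weXn2l ?leq_pred.
  rewrite -exprMn lerXn2r ?nnegrE ?bound_ge0 ?mulr_ge0 // mulrC -sqr_s ler_wpM2l //.
  by rewrite lerDr s_ge0.
have sN : s ^+ N = (u * B) ^+ (2 ^ L) by rewrite -sqr_s -exprM /N expnS mulnC.
apply: (@le_trans _ _ (s ^+ N * 2 ^+ N)).
  rewrite ler_pM ?exprn_ge0 // sN ler_wiXn2l // ?ltW //.
  by rewrite /N expnS mul2n -addnn -subn1 -addnBA ?expn_gt0 ?leq_addr.
by rewrite -exprMn lerXn2r ?nnegrE ?bound_ge0 ?mulr_ge0 // mulrC ler_wpM2l // lerDl sqr_ge0.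
Qed.

Lemma tau_le (L : nat) : H + 4 <= 2 ^+ (2 ^ L) -> tau L.+1 <= 2 * (L%:R - 1) * (s + s ^+ 2).
Proof.
(* [H + 4 <= 2 ^+ 2 ^ L] forces [L >= 1], and [L >= 2] unless [H = 0]. *)
case: L => [|[|L]] HL.
  by move: HL; rewrite expn0 expr1 => HL; have := H_ge0; lra.
  have H0 : H = 0 by move: HL; rewrite expn1 expr2 => HL; have := H_ge0; lra.
  by rewrite /tau /= H0 !(mulr0, sqrtr0) subrr mulr0 mul0r.
apply: (le_trans (tau_le_sqrt_sum HL)).
by rewrite ler_wpM2r ?addr_ge0 ?sqr_ge0 // ler_peMr // -natr1 addrK ler1n.
Qed.

Lemma level_unrolled (L : nat) (D : nat -> R) :
  (forall k, (k <= L)%N -> D k <= Num.sqrt (u * (D k.+1 + (2 ^ k.+1)%:R * H ^+ (2 ^ k.+1).-1))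
                                  + u * (2 ^ k)%:R * B ^+ (2 ^ k)) ->
  D L.+1 <= H ^+ (2 ^ L.+1) ->
  forall j, (j <= L.+1)%N ->
    D (L.+1 - j)%N <= B ^+ (2 ^ (L.+1 - j)).-1 * ((2 ^ (L.+1 - j))%:R * G + tau j).
Proof.
move=> hD hDL; elim=> [|j IH] jL.
  have N_gt0 : (0 < 2 ^ L.+1)%N by rewrite expn_gt0.
  rewrite subn0; apply: (le_trans hDL); rewrite -{1}(prednK N_gt0) exprSr.
  by rewrite ler_pM ?exprn_ge0 ?lerXn2r ?nnegrE // lerDr mulr_ge0 ?ler0n // /G mulr_ge0
    ?addr_ge0 ?sqr_ge0.
have kE : (L.+1 - j = (L - j).+1)%N by rewrite subSn.
have := IH (ltnW jL); rewrite kE subSS; set k := (L - j)%N => hDk.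
have := hD k (leq_subr _ _); rewrite expnS mul2n => hk; rewrite expnS mul2n in hDk.
have pow_gt0 : (0 < 2 ^ k)%N by rewrite expn_gt0.
exact: level_step pow_gt0 (tau_ge0 j) hDk hk.
Qed.

Lemma recursion_solution (L : nat) (D : nat -> R) : H + 4 <= 2 ^+ (2 ^ L) ->
  (forall k, (k <= L)%N -> D k <= Num.sqrt (u * (D k.+1 + (2 ^ k.+1)%:R * H ^+ (2 ^ k.+1).-1))
                                  + u * (2 ^ k)%:R * (H + 1) ^+ (2 ^ k)) ->
  D L.+1 <= H ^+ (2 ^ L.+1) ->
  D 0%N <= 2 * (L%:R + 1) * Num.sqrt (u * (H + 1)) + (L%:R + 1) * (2 * u) * (H + 1).
Proof.
move=> HL hD hDL; have := level_unrolled hD hDL (leqnn L.+1).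
rewrite subnn expn0 expr0 !mul1r => /le_trans; apply.
have -> : 2 * (L%:R + 1) * s + (L%:R + 1) * (2 * u) * B = G + 2 * (L%:R - 1) * (s + s ^+ 2).
  by rewrite /G sqr_s; ring.
by rewrite lerD2l tau_le.
Qed.

End LevelRecursion.

Section LevelGaps.
Variables (R : realType) (S : finType) (Mp Mh : S -> S -> R) (mu x : S -> R) (H : R).
Hypotheses (Mp_ge0 : forall s s', 0 <= Mp s s') (Mp_sum1 : forall s, \sum_s' Mp s s' = 1).
Hypotheses (Mh_ge0 : forall s s', 0 <= Mh s s') (Mh_sum1 : forall s, \sum_s' Mh s s' = 1).
Hypotheses (mu_ge0 : forall s, 0 <= mu s) (mu_sum1 : \sum_s mu s = 1).
Hypothesis mu_inv : forall z : S -> R, \sum_s mu s * mapply Mh z s = \sum_s mu s * z s.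
Hypotheses (H_ge0 : 0 <= H) (x_range : forall s, 0 <= x s <= H).
Hypothesis x_span : forall s, x s - mapply Mp x s <= 1.

Lemma mean_poisson_gap (rr : S -> R) (c : R) : (forall s, rr s = c + x s - mapply Mp x s) ->
  \sum_s mu s * rr s - c = \sum_s mu s * (mapply Mh x s - mapply Mp x s).
Proof.
move=> rrE.
rewrite (eq_bigr (fun s => mu s * c + (mu s * x s - mu s * mapply Mp x s))); last first.
  by move=> s _; rewrite rrE; ring.
rewrite [RHS](eq_bigr (fun s => mu s * mapply Mh x s - mu s * mapply Mp x s)); last first.
  by move=> s _; ring.
by rewrite big_split /= !sumrB mean_cst // mu_inv; ring.
Qed.

Definition level_gap (k : nat) : R :=
  \sum_s mu s * `|mapply Mh (epow x (2 ^ k)) s - mapply Mp (epow x (2 ^ k)) s|.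

Lemma epow_range k s : 0 <= epow x k s <= H ^+ k.
Proof. by have /andP[? ?] := x_range s; rewrite exprn_ge0 ?lerXn2r ?nnegrE. Qed.

Lemma level_gap_le k : level_gap k <= H ^+ (2 ^ k).
Proof.
apply: (mean_le mu_ge0 mu_sum1) => s.
have /andP[? ?] := mapply_in_range Mh_ge0 Mh_sum1 s (epow_range (2 ^ k)).
have /andP[? ?] := mapply_in_range Mp_ge0 Mp_sum1 s (epow_range (2 ^ k)).
by rewrite ler_norml; apply/andP; split; lra.
Qed.

Lemma epow_sub_sqr_le k s :
  epow x (2 ^ k.+1) s - mapply Mp (epow x (2 ^ k)) s ^+ 2 <= (2 ^ k.+1)%:R * H ^+ (2 ^ k.+1).-1.
Proof.
have x_ge0 u : 0 <= x u by case/andP: (x_range u).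
have /andP[Mx_ge0 Mx_le] := mapply_in_range Mp_ge0 Mp_sum1 s x_range.
apply: (@le_trans _ _ (x s ^+ (2 ^ k.+1) - mapply Mp x s ^+ (2 ^ k.+1))).
  have epow_ge0 u : 0 <= epow x (2 ^ k) u by rewrite exprn_ge0.
  rewrite lerD2l lerN2 expnSr exprM lerXn2r ?nnegrE ?exprn_ge0 ?(mean_ge0 (Mp_ge0 s)) //.
  exact: exp2n_mapply_le.
by rewrite subrXX_le ?x_range ?Mx_ge0 ?Mx_le ?x_span.
Qed.

Lemma mean_Var_le k : \sum_s mu s * Var Mp (epow x (2 ^ k)) s
  <= level_gap k.+1 + (2 ^ k.+1)%:R * H ^+ (2 ^ k.+1).-1.
Proof.
(* [Var] splits as [(Mp - Mh) xN + (xN - (Mp x^m)^2) + (Mh xN - xN)], and the last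
   term has mu-mean zero. *)
set N := (2 ^ k.+1)%N; set xN := epow x N.
have sqrE : (fun u => epow x (2 ^ k) u ^+ 2) = xN.
  by apply/funext => u; rewrite /xN /epow -exprM -expnSr.
apply: (@le_trans _ _ (\sum_s (mu s * `|mapply Mh xN s - mapply Mp xN s|
            + mu s * (N%:R * H ^+ N.-1) + (mu s * mapply Mh xN s - mu s * xN s)))).
  apply: ler_sum => s _; rewrite -mulrBr -!mulrDr ler_wpM2l // Var_mapply // sqrE.
  have := epow_sub_sqr_le k s; rewrite -/N -/xN.
  by have := ler_norm (mapply Mp xN s - mapply Mh xN s); rewrite distrC; lra.
by rewrite big_split /= big_split /= sumrB mu_inv subrr addr0 mean_cst.
Qed.

Lemma level_gap_rec (u : R) k : 0 <= u ->
  (forall s, `|mapply Mh (epow x (2 ^ k)) s - mapply Mp (epow x (2 ^ k)) s|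
     <= Num.sqrt (u * Var Mp (epow x (2 ^ k)) s) + u * (2 ^ k)%:R * (H + 1) ^+ (2 ^ k)) ->
  level_gap k <= Num.sqrt (u * (level_gap k.+1 + (2 ^ k.+1)%:R * H ^+ (2 ^ k.+1).-1))
                 + u * (2 ^ k)%:R * (H + 1) ^+ (2 ^ k).
Proof.
move=> u_ge0 gap_le; set c := u * _ * _.
have Var_ge0 s : 0 <= u * Var Mp (epow x (2 ^ k)) s.
  by rewrite mulr_ge0 // (mean_ge0 (Mp_ge0 s)) // => s'; rewrite sqr_ge0.
apply: (@le_trans _ _ (\sum_s mu s * (Num.sqrt (u * Var Mp (epow x (2 ^ k)) s) + c))).
  by apply: ler_sum => s _; rewrite ler_wpM2l.
under eq_bigr do rewrite mulrDr.
rewrite big_split /= mean_cst // lerD2r.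
apply: le_trans (mean_sqrt_le mu_ge0 mu_sum1 Var_ge0) _.
rewrite ler_wsqrtr //; under eq_bigr do rewrite mulrCA.
by rewrite -big_distrr /= ler_wpM2l // mean_Var_le.
Qed.

Lemma mean_gap_bound (u : R) (L : nat) : 0 <= u -> H + 4 <= 2 ^+ (2 ^ L) ->
  (forall k, (k <= L)%N -> forall s,
     `|mapply Mh (epow x (2 ^ k)) s - mapply Mp (epow x (2 ^ k)) s|
     <= Num.sqrt (u * Var Mp (epow x (2 ^ k)) s) + u * (2 ^ k)%:R * (H + 1) ^+ (2 ^ k)) ->
  `|\sum_s mu s * (mapply Mh x s - mapply Mp x s)|
    <= 2 * (L%:R + 1) * Num.sqrt (u * (H + 1)) + (L%:R + 1) * (2 * u) * (H + 1).
Proof.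
move=> u_ge0 HL gap_le.
apply: le_trans (ler_norm_sum _ _ _) _.
apply: le_trans (recursion_solution H_ge0 u_ge0 HL _ (level_gap_le L.+1)).
  by apply: ler_sum => s _; rewrite normrM ger0_norm.
by move=> k kL; exact: level_gap_rec (gap_le k kL).
Qed.

End LevelGaps.

Section Log2.
Variable R : realType.

Lemma le_exp2_of_log2_le (y : R) (n : nat) : 0 < y -> log2 y <= n%:R -> y <= 2 ^+ n.
Proof.
move=> y_gt0; have ln2_gt0 : 0 < ln (2 : R) by rewrite ln_gt0 // ltr1n.
rewrite /log2 ler_pdivrMr // => hy.
by rewrite -ler_ln ?posrE ?exprn_gt0 // lnXn // -[ln 2 *+ n]mulr_natl.
Qed.

Lemma ceil_loglog (x : R) : 0 <= x ->
  exists L : nat, Num.ceil (log2 (log2 (x + 4))) = L%:Z /\ x + 4 <= 2 ^+ (2 ^ L).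
Proof.
move=> x_ge0; have ln2_gt0 : 0 < ln (2 : R) by rewrite ln_gt0 // ltr1n.
have log_gt1 : 1 < log2 (x + 4).
  by rewrite /log2 ltr_pdivlMr // mul1r ltr_ln ?posrE; lra.
have loglog_gt0 : 0 < log2 (log2 (x + 4)) by rewrite /log2 divr_gt0 // ln_gt0.
have ceil_gt0 : 0 < Num.ceil (log2 (log2 (x + 4))).
  by rewrite -(ltr0z R); apply: lt_le_trans loglog_gt0 (ceil_ge _).
exists `|Num.ceil (log2 (log2 (x + 4)))|%N; split; first by rewrite gez0_abs // ltW.
apply: le_exp2_of_log2_le; first lra.
rewrite natrX; apply: le_exp2_of_log2_le; first exact: lt_trans log_gt1.
by rewrite [leRHS]pmulrn gez0_abs ?ceil_ge // ltW.
Qed.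

End Log2.

Section SupNorm.
Variables (R : realType) (S : finType).

Lemma supn_ge0 (x : S -> R) : 0 <= supn x.
Proof. exact: bigmax_ge_id. Qed.

Lemma le_supn (x : S -> R) s : x s <= supn x.
Proof. exact: le_trans (ler_norm _) (le_bigmax _ (fun s => `|x s|) s). Qed.

Lemma minS_le (x : S -> R) s : minS x <= x s.
Proof. exact: bigmin_le. Qed.

End SupNorm.

Section PolicyChain.
Variables (R : realType) (S A : finType) (P : S -> A -> S -> R) (pi r : S -> A -> R).
Hypotheses (P_kernel : is_kernel P) (pi_policy : is_policy pi).

Lemma Ppi_ge0 s s' : 0 <= Ppi P pi s s'.
Proof.
case: P_kernel pi_policy => [P_ge0 _] [pi_ge0 _].
by apply: sumr_ge0 => a _; rewrite mulr_ge0.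
Qed.

Lemma Ppi_sum1 s : \sum_s' Ppi P pi s s' = 1.
Proof.
case: P_kernel pi_policy => [_ P_sum1] [_ pi_sum1].
rewrite /Ppi exchange_big /= -(pi_sum1 s); apply: eq_bigr => a _.
by rewrite -big_distrr /= P_sum1 mulr1.
Qed.

Hypothesis r01 : forall s a, 0 <= r s a <= 1.

Lemma rpi_in01 s : 0 <= rpi pi r s <= 1.
Proof.
case: pi_policy => [pi_ge0 pi_sum1].
by rewrite (mean_ge0 (pi_ge0 s)) ?(mean_le (pi_ge0 s) (pi_sum1 s)) // => a; case/andP: (r01 s a).
Qed.

Lemma gain_in01 s : 0 <= gain P pi r s <= 1.
Proof.
exact: (mapply_in_range (Pinf_ge0 Ppi_ge0 Ppi_sum1) (Pinf_sum1 Ppi_ge0 Ppi_sum1) s rpi_in01).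
Qed.

Lemma poisson_shift (c : R) s :
  rpi pi r s = gain P pi r s + (bias P pi r s - c) - mapply (Ppi P pi) (fun u => bias P pi r u - c) s.
Proof.
have pe : rpi pi r s = gain P pi r s + bias P pi r s - mapply (Ppi P pi) (bias P pi r) s.
  exact: poisson_equation Ppi_ge0 Ppi_sum1 (rpi pi r) s.
by rewrite mapplyB (mapply_cst Ppi_sum1) {1}pe; ring.
Qed.

Lemma shifted_bias_span (c : R) s :
  (bias P pi r s - c) - mapply (Ppi P pi) (fun u => bias P pi r u - c) s <= 1.
Proof.
have /andP[_ rpi_le1] := rpi_in01 s; have /andP[gain_ge0 _] := gain_in01 s.
by move: rpi_le1; rewrite (poisson_shift c); lra.
Qed.

End PolicyChain.

Unset Implicit Arguments.

Theorem mainTheorem17 (R : realType) (S A : finType)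
  (P Phat : S -> A -> S -> R) (r : S -> A -> R) (pi : S -> A -> R)
  (n : nat) (alpha : R) :
  is_kernel P -> is_kernel Phat ->
  (forall s a, 0 <= r s a <= 1) ->
  (0 < n)%N ->
  is_policy pi ->
  (exists c : R, forall s, gain P pi r s = c) ->
  0 < alpha ->
  let h := bias P pi r in
  let hbar := fun s => h s - minS h in
  let l : int := Num.ceil (log2 (log2 (supn hbar + 4))) in
  (forall k : nat, (k%:Z <= l)%R -> forall s : S,
     `| (mapply (Ppi Phat pi) (epow hbar (2 ^ k))
         - mapply (Ppi P pi) (epow hbar (2 ^ k))) s |
     <= Num.sqrt (alpha * Var (Ppi P pi) (epow hbar (2 ^ k)) s / n%:R)
        + alpha * (2 ^ k)%:R / n%:R * (supn hbar + 1) ^+ (2 ^ k)) ->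
  supn (fun s => gain Phat pi r s - gain P pi r s)
  <= 2 * (l%:~R + 1) * Num.sqrt (alpha * (supn hbar + 1) / n%:R)
     + (l%:~R + 1) * (2 * alpha / n%:R) * (supn hbar + 1).
Proof.
move=> P_ker Ph_ker r01 _ pi_pol [c gainE] alpha_gt0 h hbar l gap_le.
have hbar_range s : 0 <= hbar s <= supn hbar by rewrite subr_ge0 minS_le le_supn.
have poisson_hbar s : rpi pi r s = c + hbar s - mapply (Ppi P pi) hbar s.
  by rewrite -(gainE s); exact: poisson_shift.
have [L [lE HL]] := ceil_loglog (supn_ge0 hbar); rewrite -/l in lE.
set u := alpha / n%:R.
have u_ge0 : 0 <= u by rewrite divr_ge0 ?ler0n ?ltW.
rewrite lE -pmulrn [alpha * _ / _]mulrAC -[2 * alpha / _]mulrA -/u.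
rewrite {1}/supn; apply: bigmax_le => [|s0 _].
  have B_ge0 : 0 <= supn hbar + 1 by rewrite addr_ge0 ?supn_ge0.
  have L_ge0 : 0 <= L%:R + 1 :> R by rewrite addr_ge0 ?ler0n.
  by rewrite addr_ge0 // !mulr_ge0 // ltW.
have [Mp_ge0 Mp_sum1] := (Ppi_ge0 P_ker pi_pol, Ppi_sum1 P_ker pi_pol).
have [Mh_ge0 Mh_sum1] := (Ppi_ge0 Ph_ker pi_pol, Ppi_sum1 Ph_ker pi_pol).
have mu_inv z : \sum_s Pinf (Ppi Phat pi) s0 s * mapply (Ppi Phat pi) z s
              = \sum_s Pinf (Ppi Phat pi) s0 s * z s := Pinf_mapply Mh_ge0 Mh_sum1 z s0.
have mu_sum1 := Pinf_sum1 Mh_ge0 Mh_sum1 s0.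
have -> : gain Phat pi r s0 - gain P pi r s0
    = \sum_s Pinf (Ppi Phat pi) s0 s * (mapply (Ppi Phat pi) hbar s - mapply (Ppi P pi) hbar s).
  by rewrite gainE; have := mean_poisson_gap mu_sum1 mu_inv poisson_hbar.
apply: (mean_gap_bound Mp_ge0 Mp_sum1 Mh_ge0 Mh_sum1 (Pinf_ge0 Mh_ge0 Mh_sum1 s0) mu_sum1 mu_inv
          (supn_ge0 hbar) hbar_range (shifted_bias_span P_ker pi_pol r01 _) u_ge0 HL) => k kL s.
have := gap_le k _ s; rewrite lE lez_nat => /(_ kL).
by rewrite [alpha * Var _ _ _ / _]mulrAC [alpha * _%:R / _]mulrAC.
Qed.
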